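(* Let $\mathcal M=(M,<,+,0,\ldots)$ be a definably complete locally o-minimal expansion of an ordered group. Let $f:(X,\tau_X)\to(Y,\tau_Y)$ be a definably closed definable continuous map between definable topological spaces such that $f^{-1}(y)$ is definably compact for every $y\in Y$. Then $f$ is definably proper.
   Context: ''Definable'' means definable in $\mathcal M$ with parameters. $\mathcal M$ is an expansion of an ordered group with dense order without endpoints; locally o-minimal: for every definable $Z\subseteq M$ and $a\in M$ there is an open interval $I\ni a$ with $Z\cap I$ a finite union of points and open intervals; definably complete: every definable subset of $M$ has sup and inf in $M\cup\{\pm\infty\}$. A definable topological space is a definable set with a topology having a definable family as open base. A definable subset is definably compact if, with the relative topology, every definable filtered family (any two members contain a common member) of nonempty closed subsets has nonempty intersection. $f$ is definably closed if $f(C)$ is closed for every definable closed $C\subseteq X$, and definably proper if $f^{-1}(C)$ is definably compact for every definably compact definable $C\subseteq Y$. *)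

From Stdlib Require Import List.
From mathcomp Require Import all_boot all_algebra.
Set Implicit Arguments. Unset Strict Implicit. Unset Printing Implicit Defensive.
Import GRing.Theory.
Local Open Scope ring_scope.

Notation pset T := (T -> Prop).

Definition vjoin (M : Type) (n m : nat) (x : 'I_n -> M) (y : 'I_m -> M)
  : 'I_(n + m) -> M :=
  fun k => match split k with inl i => x i | inr j => y j end.
Definition vleft (M : Type) (n m : nat) (z : 'I_(n + m) -> M) : 'I_n -> M :=
  fun i => z (lshift m i).
Definition vright (M : Type) (n m : nat) (z : 'I_(n + m) -> M) : 'I_m -> M :=
  fun j => z (rshift n j).

Record dense_ordered_group (M : zmodType) (lt : M -> M -> Prop) : Prop := {
  og_irrefl : forall x, ~ lt x x;
  og_trans : forall x y z, lt x y -> lt y z -> lt x z;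
  og_total : forall x y, lt x y \/ x = y \/ lt y x;
  og_add : forall x y z, lt x y -> lt (x + z) (y + z);
  og_dense : forall x y, lt x y -> exists z, lt x z /\ lt z y;
  og_noleft : forall x, exists y, lt y x;
  og_noright : forall x, exists y, lt x y }.

(* def n A  means: A ⊆ M^n is definable (with parameters) in the expansion.
   The collection of definable sets of an expansion of (M,<,+,0) is exactly a
   family of Boolean algebras closed under products, projections, containing
   the diagonals, the singletons (parameters), and the graphs of < and +
   (van den Dries' notion of a structure).  Closure under reindexing of
   coordinates is derivable from these and is included for convenience. *)
Record expansion (M : zmodType) (lt : M -> M -> Prop)
    (def : forall n, pset ('I_n -> M) -> Prop) : Prop := {
  def_setT : forall n, def n (fun _ => True);
  def_compl : forall n A, def n A -> def n (fun x => ~ A x);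
  def_union : forall n A B, def n A -> def n B -> def n (fun x => A x \/ B x);
  def_prod : forall n m A B, def n A -> def m B ->
     def (n + m) (fun z => A (vleft z) /\ B (vright z));
  def_proj : forall n m A, def (n + m) A ->
     def n (fun x => exists y : 'I_m -> M, A (vjoin x y));
  def_diag : forall n (i j : 'I_n), def n (fun x => x i = x j);
  def_reindex : forall n m (g : 'I_m -> 'I_n) A, def m A ->
     def n (fun x => A (fun i => x (g i)));
  def_const : forall a : M, def 1 (fun x => x ord0 = a);
  def_lt : def 2 (fun x => lt (x ord0) (x (Ordinal (isT : 1 < 2)%N)));
  def_add : def 3 (fun x => x ord0 + x (Ordinal (isT : 1 < 3)%N)
                             = x (Ordinal (isT : 2 < 3)%N)) }.

Definition to1 (M : Type) (Z : pset ('I_1 -> M)) : pset M := fun x => Z (fun _ => x).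

Definition locally_o_minimal (M : zmodType) (lt : M -> M -> Prop)
    (def : forall n, pset ('I_n -> M) -> Prop) : Prop :=
  forall Z, def 1%N Z -> forall a : M,
    exists l u, lt l a /\ lt a u /\
      exists (ps : seq M) (ivs : seq (M * M)),
        forall x, (to1 Z x /\ lt l x /\ lt x u) <->
          (List.In x ps \/ exists p q, List.In (p, q) ivs /\ lt p x /\ lt x q).

Definition is_lub (M : Type) (lt : M -> M -> Prop) (Z : pset M) (s : M) :=
  (forall z, Z z -> ~ lt s z) /\ (forall b, (forall z, Z z -> ~ lt b z) -> ~ lt b s).
Definition is_glb (M : Type) (lt : M -> M -> Prop) (Z : pset M) (s : M) :=
  (forall z, Z z -> ~ lt z s) /\ (forall b, (forall z, Z z -> ~ lt z b) -> ~ lt s b).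

(* every definable subset of M has sup and inf in M ∪ {±oo}: i.e. nonempty
   bounded-above (resp. below) definable sets have a sup (resp. inf) in M *)
Definition definably_complete (M : zmodType) (lt : M -> M -> Prop)
    (def : forall n, pset ('I_n -> M) -> Prop) : Prop :=
  forall Z, def 1%N Z ->
    ((exists z, to1 Z z) -> (exists b, forall z, to1 Z z -> ~ lt b z) ->
       exists s, is_lub lt (to1 Z) s) /\
    ((exists z, to1 Z z) -> (exists b, forall z, to1 Z z -> ~ lt z b) ->
       exists s, is_glb lt (to1 Z) s).

(* A definable topological space: a definable X ⊆ M^n with a topology having
   the definable family {B_c : c ∈ C} (C ⊆ M^k) as open base. *)
Record DTop (M : zmodType) (def : forall n, pset ('I_n -> M) -> Prop) (n : nat) := {
  dt_pts : pset ('I_n -> M);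
  dt_k : nat;
  dt_idx : pset ('I_dt_k -> M);
  dt_base : pset ('I_(dt_k + n) -> M);
  dt_pts_def : def n dt_pts;
  dt_idx_def : def dt_k dt_idx;
  dt_base_def : def (dt_k + n) dt_base;
  dt_base_sub : forall c x, dt_idx c -> dt_base (vjoin c x) -> dt_pts x;
  dt_base_cover : forall x, dt_pts x -> exists c, dt_idx c /\ dt_base (vjoin c x);
  dt_base_inter : forall c d x, dt_idx c -> dt_idx d ->
     dt_base (vjoin c x) -> dt_base (vjoin d x) ->
     exists e, dt_idx e /\ dt_base (vjoin e x) /\
       forall y, dt_base (vjoin e y) -> dt_base (vjoin c y) /\ dt_base (vjoin d y) }.

Arguments dt_pts {M def n} _ _.
Arguments dt_k {M def n} _.
Arguments dt_idx {M def n} _ _.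
Arguments dt_base {M def n} _ _.

Section Topo.
Variables (M : zmodType) (def : forall n, pset ('I_n -> M) -> Prop) (n : nat).
Variable S : DTop def n.

Definition bopen (c : 'I_(dt_k S) -> M) : pset ('I_n -> M) :=
  fun x => dt_base S (vjoin c x).

Definition open_in (U : pset ('I_n -> M)) : Prop :=
  (forall x, U x -> dt_pts S x) /\
  forall x, U x -> exists c, dt_idx S c /\ bopen c x /\ forall y, bopen c y -> U y.

Definition closed_rel (K A : pset ('I_n -> M)) : Prop :=
  (forall x, A x -> K x) /\
  forall x, K x ->
    (forall c, dt_idx S c -> bopen c x -> exists y, bopen c y /\ A y) -> A x.

Definition closed_in (A : pset ('I_n -> M)) : Prop := closed_rel (dt_pts S) A.

Definition dcompact (K : pset ('I_n -> M)) : Prop :=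
  (forall x, K x -> dt_pts S x) /\
  forall (k : nat) (C : pset ('I_k -> M)) (F : pset ('I_(k + n) -> M)),
    @def k C -> @def (k + n) F -> (exists c, C c) ->
    (forall c, C c -> (exists x, F (vjoin c x)) /\ closed_rel K (fun x => F (vjoin c x))) ->
    (forall c d, C c -> C d -> exists e, C e /\
        forall x, F (vjoin e x) -> F (vjoin c x) /\ F (vjoin d x)) ->
    exists x, forall c, C c -> F (vjoin c x).
End Topo.

Section Maps.
Variables (M : zmodType) (def : forall n, pset ('I_n -> M) -> Prop) (n m : nat).
Variables (X : DTop def n) (Y : DTop def m) (f : ('I_n -> M) -> ('I_m -> M)).

Definition dpreim (B : pset ('I_m -> M)) : pset ('I_n -> M) :=
  fun x => dt_pts X x /\ B (f x).
Definition dimg (A : pset ('I_n -> M)) : pset ('I_m -> M) :=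
  fun y => exists x, A x /\ f x = y.

Definition definable_map : Prop :=
  (forall x, dt_pts X x -> dt_pts Y (f x)) /\
  @def (n + m) (fun z => dt_pts X (vleft z) /\ f (vleft z) = vright z).

Definition continuous_map : Prop :=
  forall U, open_in Y U -> open_in X (dpreim U).

Definition definably_closed_map : Prop :=
  forall A, @def n A -> closed_in X A -> closed_in Y (dimg A).

Definition definably_proper : Prop :=
  forall C, @def m C -> (forall y, C y -> dt_pts Y y) -> dcompact Y C ->
    dcompact X (dpreim C).
End Maps.

Arguments dpreim {M def n m} X f B _.
Arguments dimg {M n m} f A _.

(* The image of a definable closed filtered family in f^-1(C) is a definable
   closed filtered family in C, because f is definably closed and a family
   member is recovered from its closure in X by intersecting with f^-1(C).
   Compactness of C yields a point y in all the images; the traces of the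
   family on the fibre f^-1(y) then form a closed filtered family in that
   definably compact fibre, so they have a common point. *)

From mathcomp Require Import all_boot all_algebra.
From Stdlib Require Import Classical FunctionalExtensionality PropExtensionality.
Set Implicit Arguments. Unset Strict Implicit. Unset Printing Implicit Defensive.

Section Coordinates.
Variable M : Type.

Lemma vleft_vjoin n m (x : 'I_n -> M) (y : 'I_m -> M) : vleft (vjoin x y) = x.
Proof.
by apply: functional_extensionality => i; rewrite /vleft /vjoin (unsplitK (inl _ i)).
Qed.

Lemma vright_vjoin n m (x : 'I_n -> M) (y : 'I_m -> M) : vright (vjoin x y) = y.
Proof.
by apply: functional_extensionality => i; rewrite /vright /vjoin (unsplitK (inr _ i)).
Qed.

Definition vfib k n (F : pset ('I_(k + n) -> M)) (c : 'I_k -> M) : pset ('I_n -> M) :=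
  fun x => F (vjoin c x).

Definition filtered_family k n (C : pset ('I_k -> M)) (F : pset ('I_(k + n) -> M)) : Prop :=
  forall c d, C c -> C d -> exists e, C e /\
    forall x, vfib F e x -> vfib F c x /\ vfib F d x.

Lemma filtered_family_mono k n m (C : pset ('I_k -> M))
    (F : pset ('I_(k + n) -> M)) (G : pset ('I_(k + m) -> M))
    (phi : pset ('I_n -> M) -> pset ('I_m -> M)) :
  (forall A B, (forall x, A x -> B x) -> forall y, phi A y -> phi B y) ->
  (forall c, vfib G c = phi (vfib F c)) ->
  filtered_family C F -> filtered_family C G.
Proof.
move=> phi_mono Gphi Ffilt c d Cc Cd; have [e [Ce Fe]] := Ffilt c d Cc Cd.
exists e; split=> // y; rewrite !Gphi => Gy.
by split; apply: phi_mono Gy => x /Fe [].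
Qed.

Definition fam_restrict k n (F : pset ('I_(k + n) -> M)) (A : pset ('I_n -> M)) :
  pset ('I_(k + n) -> M) := fun w => F w /\ A (vright w).

Lemma vfib_fam_restrict k n (F : pset ('I_(k + n) -> M)) A c :
  vfib (fam_restrict F A) c = fun x => vfib F c x /\ A x.
Proof.
by apply: functional_extensionality => x; rewrite /vfib /fam_restrict vright_vjoin.
Qed.

Lemma filtered_fam_restrict k n (C : pset ('I_k -> M)) (F : pset ('I_(k + n) -> M)) A :
  filtered_family C F -> filtered_family C (fam_restrict F A).
Proof.
apply: (filtered_family_mono (phi := fun B x => B x /\ A x)) (vfib_fam_restrict F A).
by move=> B B' BB' x [Bx Ax]; split; first exact: BB'.
Qed.

End Coordinates.

Section Definable.
Variables (M : zmodType) (lt : M -> M -> Prop) (def : forall n, pset ('I_n -> M) -> Prop).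
Hypothesis Hexp : expansion lt def.

Lemma def_iff n (A B : pset ('I_n -> M)) :
  def A -> (forall x, A x <-> B x) -> def B.
Proof.
move=> defA AB; suff -> : B = A by [].
apply: functional_extensionality => x; apply: propositional_extensionality.
by split=> /AB.
Qed.

Lemma def_and n (A B : pset ('I_n -> M)) :
  def A -> def B -> def (fun x => A x /\ B x).
Proof.
move=> defA defB.
apply: def_iff (def_compl Hexp (def_union Hexp (def_compl Hexp defA) (def_compl Hexp defB))) _.
by move=> x; split=> [/not_or_and [/NNPP Ax /NNPP Bx] //|[Ax Bx]]; tauto.
Qed.

Lemma def_exists n m (A : pset ('I_(n + m) -> M)) (B : pset ('I_n -> M)) :
  def A -> (forall x, B x <-> exists y, A (vjoin x y)) -> def B.
Proof. by move=> defA AB; apply: def_iff (def_proj Hexp defA) _ => x; rewrite AB. Qed.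

Lemma def_vjoin_reindex N p q (A : pset ('I_(p + q) -> M))
    (ga : 'I_p -> 'I_N) (gb : 'I_q -> 'I_N) :
  def A -> def (fun w => A (vjoin (fun a => w (ga a)) (fun b => w (gb b)))).
Proof.
move=> defA.
pose g i := match split i with inl a => ga a | inr b => gb b end.
apply: def_iff (def_reindex Hexp g defA) _ => w.
suff -> : (fun i => w (g i)) = vjoin (fun a => w (ga a)) (fun b => w (gb b)) by [].
by apply: functional_extensionality => i; rewrite /g /vjoin; case: (split i).
Qed.

Lemma def_all_seq n (I : eqType) (s : seq I) (A : I -> pset ('I_n -> M)) :
  (forall i, def (A i)) -> def (fun x => forall i, i \in s -> A i x).
Proof.
move=> defA; elim: s => [|i s IHs].
  by apply: def_iff (def_setT Hexp n) _ => x; split=> // _ i; rewrite in_nil.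
apply: def_iff (def_and (defA i) IHs) _ => x; split.
  by move=> [Ax As] j; rewrite in_cons => /orP [/eqP -> //|/As].
by move=> As; split=> [|j js]; apply: As; rewrite in_cons ?eqxx ?js ?orbT.
Qed.

Lemma def_point k (c : 'I_k -> M) : def (fun x => x = c).
Proof.
have defc i : def (fun x : 'I_k -> M => x i = c i).
  exact: (def_reindex Hexp (fun _ : 'I_1 => i) (def_const Hexp (c i))).
apply: def_iff (def_all_seq (enum 'I_k) defc) _ => x; split=> [xc|-> //].
by apply: functional_extensionality => i; apply: xc; rewrite mem_enum.
Qed.

Lemma def_fix_right n k (c : 'I_k -> M) (A : pset ('I_(n + k) -> M)) :
  def A -> def (fun x => A (vjoin x c)).
Proof.
move=> defA.
have defAc : def (fun w => A w /\ vright w = c).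
  exact: def_and defA (def_reindex Hexp (@rshift n k) (def_point c)).
apply: def_exists defAc _ => x; split=> [Ax|[y]]; first by exists c; rewrite vright_vjoin.
by rewrite vright_vjoin => -[Ay <-].
Qed.

Lemma def_vfib k n (F : pset ('I_(k + n) -> M)) (c : 'I_k -> M) :
  def F -> def (vfib F c).
Proof.
move=> defF.
apply: def_iff (def_fix_right c (def_vjoin_reindex (@rshift n k) (@lshift n k) defF)) _.
move=> x; have := vright_vjoin x c; have := vleft_vjoin x c.
by rewrite /vleft /vright => -> ->.
Qed.

Lemma def_fam_restrict k n (F : pset ('I_(k + n) -> M)) (A : pset ('I_n -> M)) :
  def F -> def A -> def (fam_restrict F A).
Proof. by move=> defF defA; apply: def_and defF (def_reindex Hexp (@rshift k n) defA). Qed.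

End Definable.

Section Closure.
Variables (M : zmodType) (lt : M -> M -> Prop) (def : forall n, pset ('I_n -> M) -> Prop).
Hypothesis Hexp : expansion lt def.
Variables (n : nat) (S : DTop def n).

Definition adherent (A : pset ('I_n -> M)) (x : 'I_n -> M) : Prop :=
  forall c, dt_idx S c -> bopen c x -> exists y, bopen c y /\ A y.

Definition closure_in (A : pset ('I_n -> M)) : pset ('I_n -> M) :=
  fun x => dt_pts S x /\ adherent A x.

Lemma adherent_mono (A B : pset ('I_n -> M)) x :
  (forall y, A y -> B y) -> adherent A x -> adherent B x.
Proof.
by move=> AB adhA c Sc cx; have [y [cy /AB By]] := adhA c Sc cx; exists y.
Qed.

Lemma closed_in_closure A : closed_in S (closure_in A).
Proof.
split=> [x [] //|x Sx adhCl]; split=> // c Sc cx.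
by have [y [cy [_ adhA]]] := adhCl c Sc cx; apply: adhA.
Qed.

Lemma def_closure_in A : def A -> def (closure_in A).
Proof.
move=> defA.
pose meets c := exists z, dt_base S (vjoin c z) /\ A z.
have def_meets : def meets.
  apply: (def_exists Hexp (def_fam_restrict Hexp (dt_base_def S) defA) _).
  by move=> c; split=> -[z Hz]; exists z; rewrite /fam_restrict vright_vjoin in Hz *.
pose misses w := dt_idx S (vright w) /\
  (dt_base S (vjoin (vright w) (vleft w)) /\ ~ meets (vright w)).
have def_misses : def misses.
  apply: (def_and Hexp (def_reindex Hexp (@rshift n (dt_k S)) (dt_idx_def S)) _).
  have def_base := dt_base_def S.
  apply: (def_and Hexp (def_vjoin_reindex Hexp (@rshift n (dt_k S)) (@lshift n (dt_k S)) def_base) _).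
  exact: (def_compl Hexp (def_reindex Hexp (@rshift n (dt_k S)) def_meets)).
apply: (def_and Hexp (dt_pts_def S) _).
apply: def_iff (def_compl Hexp (def_exists Hexp def_misses (fun x => iff_refl _))) _ => x.
rewrite /misses; split=> [nomiss c Sc cx|adh [c]]; last first.
  by rewrite vleft_vjoin vright_vjoin => -[Sc [cx []]]; apply: adh.
by apply: NNPP => nomeet; apply: nomiss; exists c; rewrite vleft_vjoin vright_vjoin.
Qed.

Lemma closed_rel_setI_super (K A B : pset ('I_n -> M)) :
  closed_rel S K A -> (forall x, K x -> B x) -> closed_rel S K (fun x => B x /\ A x).
Proof.
move=> [AK Aclosed] KB; split=> [x [_ /AK] //|x Kx adh].
split; first exact: KB.
by apply: Aclosed => //; apply: adherent_mono adh => y [].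
Qed.

Lemma closed_rel_trace (K K' A : pset ('I_n -> M)) :
  closed_rel S K A -> (forall x, K' x -> K x) -> closed_rel S K' (fun x => A x /\ K' x).
Proof.
move=> [_ Aclosed] K'K; split=> [x [] //|x K'x adh]; split=> //.
by apply: Aclosed; [exact: K'K | apply: adherent_mono adh => y []].
Qed.

Lemma dcompactP (K : pset ('I_n -> M)) :
  dcompact S K <->
  (forall x, K x -> dt_pts S x) /\
  forall k (C : pset ('I_k -> M)) (F : pset ('I_(k + n) -> M)),
    def C -> def F -> (exists c, C c) ->
    (forall c, C c -> (exists x, vfib F c x) /\ closed_rel S K (vfib F c)) ->
    filtered_family C F -> exists x, forall c, C c -> vfib F c x.
Proof. exact: iff_refl. Qed.

End Closure.

Section Maps.
Variables (M : zmodType) (lt : M -> M -> Prop) (def : forall n, pset ('I_n -> M) -> Prop).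
Hypothesis Hexp : expansion lt def.
Variables (n m : nat) (X : DTop def n) (Y : DTop def m) (f : ('I_n -> M) -> ('I_m -> M)).

Definition fam_image k (F : pset ('I_(k + n) -> M)) : pset ('I_(k + m) -> M) :=
  fun z => dimg f (fun x => dt_pts X x /\ F (vjoin (vleft z) x)) (vright z).

Lemma vfib_fam_image k (F : pset ('I_(k + n) -> M)) c :
  vfib (fam_image F) c = dimg f (fun x => dt_pts X x /\ vfib F c x).
Proof.
by apply: functional_extensionality => y; rewrite /vfib /fam_image vleft_vjoin vright_vjoin.
Qed.

Lemma filtered_fam_image k (C : pset ('I_k -> M)) (F : pset ('I_(k + n) -> M)) :
  filtered_family C F -> filtered_family C (fam_image F).
Proof.
apply: (filtered_family_mono (phi := fun A => dimg f (fun x => dt_pts X x /\ A x))).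
  by move=> A B AB y [x [[Xx /AB Bx] fxy]]; exists x.
exact: vfib_fam_image.
Qed.

Hypothesis f_def : definable_map X Y f.

Lemma def_fam_image k (F : pset ('I_(k + n) -> M)) : def F -> def (fam_image F).
Proof.
move=> defF; have [_ def_graph] := f_def.
pose graph z := dt_pts X (vleft z) /\ f (vleft z) = vright z.
pose A w := F (vjoin (vleft (vleft w)) (vright w)) /\
  graph (vjoin (vright w) (vright (vleft w))).
have defA : def A.
  apply: (def_and Hexp _ _).
    exact: (def_vjoin_reindex Hexp (fun a => lshift n (lshift m a)) (@rshift (k + m) n) defF).
  exact: (def_vjoin_reindex Hexp (@rshift (k + m) n) (fun b => lshift n (rshift k b)) def_graph).
apply: (def_exists Hexp defA _) => z; rewrite /A /graph /fam_image.
by split=> -[x Hx]; exists x; rewrite !vleft_vjoin !vright_vjoin in Hx *; tauto.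
Qed.

Lemma def_dpreim_point y : def (dpreim X f (fun z => z = y)).
Proof.
have [_ def_graph] := f_def.
by apply: def_iff (def_fix_right Hexp y def_graph) _ => x; rewrite vleft_vjoin vright_vjoin.
Qed.

Lemma closed_rel_dimg (C : pset ('I_m -> M)) (A : pset ('I_n -> M)) :
  definably_closed_map X Y f -> (forall y, C y -> dt_pts Y y) ->
  def A -> closed_rel X (dpreim X f C) A -> closed_rel Y C (dimg f A).
Proof.
move=> f_closed CY defA [AC Aclosed]; split=> [y [x [/AC [_ Cfx] <-]] //|y Cy adh].
have [_ closure_closed] := f_closed _ (def_closure_in Hexp X defA) (closed_in_closure X A).
have [x [[Xx adhA] fxy]] : dimg f (closure_in X A) y.
  apply: closure_closed (CY y Cy) _; apply: adherent_mono adh => _ [x [Ax <-]].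
  exists x; split=> //; split; first by have [] := AC x Ax.
  by move=> c _ cx; exists x.
by exists x; split=> //; apply: Aclosed => //; split; rewrite ?fxy.
Qed.

End Maps.

Theorem lemma4p11 (M : zmodType) (lt : M -> M -> Prop)
  (def : forall n, pset ('I_n -> M) -> Prop)
  (Hog : dense_ordered_group lt) (Hexp : expansion lt def)
  (Hlom : locally_o_minimal lt def) (Hdc : definably_complete lt def)
  (n m : nat) (X : DTop def n) (Y : DTop def m) (f : ('I_n -> M) -> ('I_m -> M))
  (Hdef : definable_map X Y f) (Hcont : continuous_map X Y f)
  (Hclosed : definably_closed_map X Y f)
  (Hfib : forall y, dt_pts Y y -> dcompact X (dpreim X f (fun z => z = y))) :
  definably_proper X Y f.
Proof.
move=> C defC CY /dcompactP [_ Ccomp]; apply/dcompactP.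
split=> [x [] //|k C' F defC' defF C'ne Fclosed Ffilt].
have [y Gy] : exists y, forall c, C' c -> vfib (fam_image X f F) c y.
  apply: Ccomp defC' (def_fam_image Hexp Hdef defF) C'ne _ (filtered_fam_image _ _ Ffilt).
  move=> c Cc; have [[x Fx] [FC Fcl]] := Fclosed c Cc; rewrite vfib_fam_image; split.
    by have [Xx _] := FC x Fx; exists (f x), x.
  apply: (closed_rel_dimg Hexp Hclosed CY).
    exact: (def_and Hexp (dt_pts_def X) (def_vfib Hexp c defF)).
  by apply: closed_rel_setI_super => // z [].
have [c0 Cc0] := C'ne.
have Cy : C y.
  move: (Gy c0 Cc0); rewrite vfib_fam_image => -[x [[_ Fx] <-]].
  by have [_ [FC _]] := Fclosed c0 Cc0; have [] := FC x Fx.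
have /dcompactP [_ fib_comp] := Hfib y (CY y Cy).
have [x Fx] : exists x, forall c, C' c -> vfib (fam_restrict F (dpreim X f (fun z => z = y))) c x.
  have defFy := def_fam_restrict Hexp defF (def_dpreim_point Hexp Hdef y).
  apply: fib_comp defC' defFy C'ne _ _.
    move=> c Cc; rewrite vfib_fam_restrict; have [_ Fcl] := Fclosed c Cc; split.
      by move: (Gy c Cc); rewrite vfib_fam_image => -[x [[Xx Fx] fxy]]; exists x.
    by apply: closed_rel_trace Fcl _ => x [Xx fxy]; rewrite /dpreim fxy.
  exact: filtered_fam_restrict.
by exists x => c /Fx; rewrite vfib_fam_restrict => -[].
Qed.
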